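(* Let $\mathcal{V}$ be a finite veering triangulation with face set $F$, let $w$ be a weight system on $\mathcal{V}$, $F_w=\{f\in F: w_f>0\}$, and $\varphi\in\mathrm{Aut}^+(\mathcal{Q}_{\mathcal{V},w})$. For $f\in F_w$ define the sequence $g^\varphi(f)=(g_i)_{i\ge1}$ of triangles of $\mathcal{Q}_{\mathcal{V},w}$ by $g_1=\varphi(L(f))$ and, for $i\ge1$, stop if $g_i\in U(F_w)$, and otherwise set $g_{i+1}=\varphi(\mathfrak{a}(g_i))$. Then for every $f\in F_w$ the sequence $g^\varphi(f)$ is finite, and if $f,f'\in F_w$ are distinct, then the last elements of $g^\varphi(f)$ and $g^\varphi(f')$ are distinct.
   Context: A veering triangulation is in particular an ideal triangulation of a 3-manifold with a taut structure: a coorientation of faces such that each tetrahedron has two faces cooriented out and two cooriented in, and each edge is the top diagonal (common edge of the two outward-cooriented faces) of exactly one tetrahedron and the bottom diagonal of exactly one. For an edge $e$, its two sides are separated by the tetrahedra where $e$ is top and bottom diagonal. A weight system $w=(w_f)$ is a nonzero nonnegative integral solution to the branch equations (for each edge, the weights of faces on the two sides have equal sums). Pulling apart sheets of $\sum w_f f$ gives an embedded surface triangulated by $\mathcal{Q}_{\mathcal{V},w}$, which has exactly $w_f$ triangles that are copies of each face $f$. The copies of a face $f$ are linearly ordered along the coorientation; $L(f)$ and $U(f)$ are the lowermost and uppermost copies, $L(F_w)$ and $U(F_w)$ the sets of these, and for a copy $y$ that is not uppermost, $\mathfrak{a}(y)$ is the copy of the same face immediately above $y$. $\mathrm{Aut}^+(\mathcal{Q}_{\mathcal{V},w})$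 is the group of orientation-preserving combinatorial automorphisms of $\mathcal{Q}_{\mathcal{V},w}$; in particular each induces a bijection on the set of triangles. *)

From mathcomp Require Import all_boot.
Set Implicit Arguments. Unset Strict Implicit. Unset Printing Implicit Defensive.

(* Combinatorial shadow of a finite veering triangulation: its (finite) face
   set F, its (finite) edge set E and, for every edge e, the two sets of faces
   lying on the two sides of e (separated by the tetrahedra in which e is the
   top, resp. bottom, diagonal). *)

Definition weight_system (F E : finType) (side1 side2 : E -> {set F})
    (w : F -> nat) : Prop :=
  (exists f, w f != 0) /\
  forall e, \sum_(f in side1 e) w f = \sum_(f in side2 e) w f.

(* Triangles of Q_{V,w}: the copies (f, k), 0 <= k < w f, of the faces f,
   numbered from the bottom along the coorientation. *)
Definition tri (F : finType) (w : F -> nat) := {p : F * nat | p.2 < w p.1}.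

Section Copies.
Variables (F : finType) (w : F -> nat).

Definition lowcopy (f : F) (hf : 0 < w f) : tri w := exist _ (f, 0) hf.

Definition is_upper (y : tri w) : bool := (sval y).2.+1 == w (sval y).1.

(* a(y): copy of the same face immediately above y (only meaningful when y is
   not uppermost; otherwise returns y itself, a value that is never used). *)
Definition above (y : tri w) : tri w :=
  insubd y ((sval y).1, (sval y).2.+1).

(* The sequence g^phi(f), indexed from 0 (g_{i+1} here is the paper's g_{i+2});
   after reaching an element of U(F_w) it is frozen (the paper stops). *)
Fixpoint gseq (phi : tri w -> tri w) (f : F) (hf : 0 < w f) (i : nat) : tri w :=
  match i with
  | 0 => phi (lowcopy hf)
  | i'.+1 => let y := gseq phi hf i' in
             if is_upper y then y else phi (above y)
  end.

Definition stops_at (phi : tri w -> tri w) (f : F) (hf : 0 < w f) (n : nat) :=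
  is_upper (gseq phi hf n) /\ forall i, i < n -> ~~ is_upper (gseq phi hf i).

End Copies.

From mathcomp Require Import all_boot.

(* Walking a sequence g^phi(f) backwards is deterministic: before the stop
   every g_i is not uppermost, g_(i+1) = phi (a g_i), phi and a are injective,
   and L(f) is never of the form a y.  Hence an element of the sequence
   determines both its index and the face f.  In particular the sequence does
   not repeat, so it must stop since Q_(V,w) has finitely many triangles, and
   two sequences cannot end at the same triangle.  The branch equations play
   no role, and of the bijectivity of phi only injectivity is used. *)

Set Implicit Arguments.
Unset Strict Implicit.

Lemma inj_prefix_leq_card (T : finType) (g : nat -> T) (K : nat) :
  (forall i j, i < K -> j < K -> g i = g j -> i = j) -> K <= #|T|.
Proof.
move=> g_inj; have /leq_card : injective (g \o @nat_of_ord K).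
  by move=> i j /g_inj eq_ij; apply/val_inj/eq_ij.
by rewrite card_ord.
Qed.

Section Triangles.
Variables (F : finType) (w : F -> nat).

Lemma val_above (y : tri w) :
  ~~ is_upper y -> sval (above y) = ((sval y).1, (sval y).2.+1).
Proof.
case: y => [[f k] lt_k] /= not_up.
by rewrite val_insubd /= ltn_neqAle not_up lt_k.
Qed.

Lemma above_inj (y z : tri w) :
  ~~ is_upper y -> ~~ is_upper z -> above y = above z -> y = z.
Proof.
case: y z => [[f k] ?] [[f' k'] ?] not_up_y not_up_z.
move/(congr1 sval); rewrite !val_above // => -[eq_f eq_k].
by apply: val_inj; rewrite /= eq_f eq_k.
Qed.

Lemma lowcopy_neq_above (f : F) (hf : 0 < w f) (y : tri w) :
  ~~ is_upper y -> lowcopy hf <> above y.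
Proof. by move=> not_up /(congr1 (fun t : tri w => (sval t).2)); rewrite val_above. Qed.

Definition max_weight := \max_(f : F) w f.

Lemma tri_index_lt (t : tri w) : (sval t).2 < max_weight.
Proof. exact: leq_trans (svalP t) (leq_bigmax _). Qed.

Definition tri_code (t : tri w) : F * 'I_max_weight :=
  ((sval t).1, Ordinal (tri_index_lt t)).

Lemma tri_code_inj : injective tri_code.
Proof.
by move=> [[f k] ?] [[f' k'] ?] [/= eq_f eq_k]; apply: val_inj; rewrite /= eq_f eq_k.
Qed.

Variable phi : tri w -> tri w.
Hypothesis phi_inj : injective phi.

Lemma gseqS (f : F) (hf : 0 < w f) (i : nat) :
  ~~ is_upper (gseq phi hf i) -> gseq phi hf i.+1 = phi (above (gseq phi hf i)).
Proof. by move=> /negbTE /= ->. Qed.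

Lemma gseq_eq (f f' : F) (hf : 0 < w f) (hf' : 0 < w f') (i i' : nat) :
  (forall k, k < i -> ~~ is_upper (gseq phi hf k)) ->
  (forall k, k < i' -> ~~ is_upper (gseq phi hf' k)) ->
  gseq phi hf i = gseq phi hf' i' -> f = f' /\ i = i'.
Proof.
elim: i i' => [|i IHi] [|i'] below below'.
- by move/phi_inj/(congr1 (fun t : tri w => (sval t).1)).
- rewrite gseqS ?below' // => /phi_inj.
  by case/lowcopy_neq_above; rewrite below'.
- rewrite gseqS ?below // => /phi_inj/esym.
  by case/lowcopy_neq_above; rewrite below.
- rewrite !gseqS ?below ?below' // => /phi_inj/above_inj.
  case/(_ (below _ _) (below' _ _))/IHi => // [k lt_k|k lt_k|-> -> //].
  + by rewrite below // ltnW.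
  + by rewrite below' // ltnW.
Qed.

Lemma gseq_hits_upper (f : F) (hf : 0 < w f) : exists i, is_upper (gseq phi hf i).
Proof.
pose K := #|{: F * 'I_max_weight}|.+1.
have [/existsP [i up_i] | /existsPn not_up] :=
  boolP [exists i : 'I_K, is_upper (gseq phi hf i)]; first by exists i.
have below j k : j < K -> k < j -> ~~ is_upper (gseq phi hf k).
  by move=> lt_j lt_k; apply: (not_up (Ordinal (ltn_trans lt_k lt_j))).
suff: K <= #|{: F * 'I_max_weight}| by rewrite ltnn.
apply: (@inj_prefix_leq_card _ (tri_code \o gseq phi hf)) => i j lt_i lt_j.
by move/tri_code_inj/gseq_eq => [] // k; apply: below.
Qed.

Lemma gseq_stops (f : F) (hf : 0 < w f) : exists n, stops_at phi hf n.
Proof.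
have [n up_n min_n] := ex_minnP (gseq_hits_upper hf).
by exists n; split=> // i lt_i; apply/negP => /min_n; rewrite leqNgt lt_i.
Qed.

End Triangles.

Theorem lemma3p4 (F E : finType) (side1 side2 : E -> {set F}) (w : F -> nat)
    (phi : tri w -> tri w) :
  weight_system side1 side2 w ->
  bijective phi ->
  (forall (f : F) (hf : 0 < w f), exists n, stops_at phi hf n) /\
  (forall (f f' : F) (hf : 0 < w f) (hf' : 0 < w f') (n n' : nat),
      f <> f' -> stops_at phi hf n -> stops_at phi hf' n' ->
      gseq phi hf n <> gseq phi hf' n').
Proof.
move=> _ /bij_inj phi_inj; split=> [f hf | f f' hf hf' n n' neq_ff'].
  exact: gseq_stops.
move=> [_ below] [_ below'] /(gseq_eq phi_inj below below') [eq_ff' _].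
exact: neq_ff' eq_ff'.
Qed.
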